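(* Identify the tangent space of $\mathbb OP^2$ at $P_0=[1,0,0]$ with $\mathbb O^2$ via the chart $[1,u,v]\mapsto(u,v)$, a pair $(a,b)$ corresponding to the tangent vector with $du=a$, $dv=b$. Then the Riemann curvature tensor of $(\mathbb OP^2,g)$ at $P_0$ is $$\begin{aligned}R\big((a,b),(c,d),(e,f),(g,h)\big)=&\,4\langle a,e\rangle\langle c,g\rangle-4\langle c,e\rangle\langle a,g\rangle+4\langle b,f\rangle\langle d,h\rangle-4\langle d,f\rangle\langle b,h\rangle\\&-\langle e\bar d,g\bar b\rangle+\langle e\bar b,g\bar d\rangle-\langle c\bar f,a\bar h\rangle+\langle a\bar f,c\bar h\rangle-\langle a\bar d-c\bar b,\ g\bar f-e\bar h\rangle.\end{aligned}$$
   Context: Octonions: $\mathbb O=\mathbb H\oplus\mathbb H$ with product $(q_1,q_2)(p_1,p_2)=(q_1p_1-\bar p_2q_2,\ p_2q_1+q_2\bar p_1)$, conjugation $\overline{(q_1,q_2)}=(\bar q_1,-q_2)$, $\langle a,b\rangle=\mathrm{Re}(a\bar b)$, $|a|^2=\langle a,a\rangle$. $\mathbb OP^2=\mathcal U/_\sim$ with $\mathcal U=(\{1\}\times\mathbb O^2)\cup(\mathbb O\times\{1\}\times\mathbb O)\cup(\mathbb O^2\times\{1\})$ and $[a,b,c]\sim[d,e,f]$ iff $(a,b,c)=(d\lambda,e\lambda,f\lambda)$ for some $\lambda\ne0$; charts $[1,u,v]\mapsto(u,v)$, $[u,1,v]\mapsto(u,v)$, $[u,v,1]\mapsto(u,v)$,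 and metric $g$ given on each chart, for tangent vector $(du,dv)=(\xi,\eta)$, by $ds^2=\frac{|\xi|^2(1+|v|^2)+|\eta|^2(1+|u|^2)-2\mathrm{Re}[(u\bar v)(\eta\bar\xi)]}{(1+|u|^2+|v|^2)^2}$. Curvature sign convention: in coordinates in which the first derivatives of the metric vanish at the point, $R_{\alpha\beta\gamma\delta}=\tfrac12\big[\partial_\alpha\partial_\delta g_{\beta\gamma}+\partial_\beta\partial_\gamma g_{\alpha\delta}-\partial_\beta\partial_\delta g_{\alpha\gamma}-\partial_\alpha\partial_\gamma g_{\beta\delta}\big]$ (so the sectional curvature of an orthonormal pair $x,y$ is $R(x,y,x,y)$). *)

From Stdlib Require Import Reals.
From Coquelicot Require Import Coquelicot.
Open Scope R_scope.

Record quat := Quat { q0 : R; q1 : R; q2 : R; q3 : R }.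

Definition qadd (a b : quat) : quat :=
  Quat (q0 a + q0 b) (q1 a + q1 b) (q2 a + q2 b) (q3 a + q3 b).
Definition qopp (a : quat) : quat := Quat (- q0 a) (- q1 a) (- q2 a) (- q3 a).
Definition qsub (a b : quat) : quat := qadd a (qopp b).
Definition qscal (s : R) (a : quat) : quat :=
  Quat (s * q0 a) (s * q1 a) (s * q2 a) (s * q3 a).
Definition qconj (a : quat) : quat := Quat (q0 a) (- q1 a) (- q2 a) (- q3 a).
(** Hamilton product (i^2 = j^2 = k^2 = ijk = -1) *)
Definition qmul (a b : quat) : quat :=
  Quat (q0 a * q0 b - q1 a * q1 b - q2 a * q2 b - q3 a * q3 b)
       (q0 a * q1 b + q1 a * q0 b + q2 a * q3 b - q3 a * q2 b)
       (q0 a * q2 b - q1 a * q3 b + q2 a * q0 b + q3 a * q1 b)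
       (q0 a * q3 b + q1 a * q2 b - q2 a * q1 b + q3 a * q0 b).
Definition qzero : quat := Quat 0 0 0 0.

Record oct := Oct { o1 : quat; o2 : quat }.

Definition oadd (x y : oct) : oct := Oct (qadd (o1 x) (o1 y)) (qadd (o2 x) (o2 y)).
Definition osub (x y : oct) : oct := Oct (qsub (o1 x) (o1 y)) (qsub (o2 x) (o2 y)).
Definition oscal (s : R) (x : oct) : oct := Oct (qscal s (o1 x)) (qscal s (o2 x)).
Definition ozero : oct := Oct qzero qzero.
Definition omul (x y : oct) : oct :=
  Oct (qsub (qmul (o1 x) (o1 y)) (qmul (qconj (o2 y)) (o2 x)))
      (qadd (qmul (o2 y) (o1 x)) (qmul (o2 x) (qconj (o1 y)))).
Definition oconj (x : oct) : oct := Oct (qconj (o1 x)) (qopp (o2 x)).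
Definition ore (x : oct) : R := q0 (o1 x).
Definition oinner (a b : oct) : R := ore (omul a (oconj b)).
Definition onorm2 (a : oct) : R := oinner a a.

(** Points of the chart [1,u,v] -> (u,v) and tangent vectors (du,dv), both in O^2 *)
Definition O2 := (oct * oct)%type.
Definition o2add (x y : O2) : O2 := (oadd (fst x) (fst y), oadd (snd x) (snd y)).
Definition o2sub (x y : O2) : O2 := (osub (fst x) (fst y), osub (snd x) (snd y)).
Definition o2scal (s : R) (x : O2) : O2 := (oscal s (fst x), oscal s (snd x)).
Definition o2zero : O2 := (ozero, ozero).

Definition ds2 (p : O2) (X : O2) : R :=
  let u := fst p in let v := snd p in let xi := fst X in let eta := snd X in
  (onorm2 xi * (1 + onorm2 v) + onorm2 eta * (1 + onorm2 u)
     - 2 * ore (omul (omul u (oconj v)) (omul eta (oconj xi))))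
  / (1 + onorm2 u + onorm2 v) ^ 2.

Definition gmet (p : O2) (X Y : O2) : R :=
  (ds2 p (o2add X Y) - ds2 p (o2sub X Y)) / 4.

(** Second directional derivative at the base point P0 = (0,0) of a function
    of the chart point: D2 F X W = d/ds d/dt F(s X + t W) at s = t = 0,
    i.e. X^alpha W^delta d_alpha d_delta F(0). *)
Definition D2 (F : O2 -> R) (X W : O2) : R :=
  Derive (fun s => Derive (fun t => F (o2add (o2scal s X) (o2scal t W))) 0) 0.

(** Riemann tensor at P0 by the convention of the paper (valid in coordinates
    where the first derivatives of the metric vanish at P0):
    R_{abcd} = 1/2 [d_a d_d g_bc + d_b d_c g_ad - d_b d_d g_ac - d_a d_c g_bd],
    contracted with X^a Y^b Z^c W^d. *)
Definition curvR (X Y Z W : O2) : R :=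
  / 2 * ( D2 (fun p => gmet p Y Z) X W
        + D2 (fun p => gmet p X W) Y Z
        - D2 (fun p => gmet p X Z) Y W
        - D2 (fun p => gmet p Y W) X Z ).

(* In the chart (u,v) the metric is g_p(Y,Z) = (<Y,Z> + H_{YZ}(p,p)/2) / (1 + |p|^2)^2, where
   <,> is the flat inner product of O^2 and H_{YZ} is the Hessian at 0 of the numerator, a
   quadratic form in p.  Restricted to a plane p = sX + tW this is an explicit rational
   function of (s,t): its first derivatives vanish at 0 and its mixed second derivative is
   H_{YZ}(X,W) - 4<Y,Z><X,W>.  Since H_{YZ}(X,W) = H_{XW}(Y,Z), the curvature becomes
   H_{YZ}(X,W) - H_{XZ}(Y,W) + 4<X,Z><Y,W> - 4<X,W><Y,Z>, and the octonionic terms collapse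
   to the stated ones by the polarized composition law
   <x conj y, z conj w> + <x conj w, z conj y> = 2<x,z><y,w>, i.e. |xy| = |x||y|. *)
From Stdlib Require Import Reals Lra Psatz.
From Coquelicot Require Import Coquelicot.
Open Scope R_scope.

(* Fresh names: destruct would otherwise reuse the field names q0..q3, shadowing the
   projections that [oct_unfold] must unfold. *)
Ltac oct_coords :=
  repeat match goal with
  | x : O2 |- _ => destruct x
  | x : (oct * oct)%type |- _ => destruct x
  | x : oct |- _ => destruct x
  | x : quat |- _ =>
      let a := fresh "r" in let b := fresh "r" in
      let c := fresh "r" in let d := fresh "r" in destruct x as [a b c d]
  end.

Ltac oct_unfold :=
  cbv beta iota zeta delta [onorm2 oinner ore omul oconj osub oadd oscal
    qscal qsub qadd qmul qconj qopp o2add o2sub o2scal fst snd o1 o2 q0 q1 q2 q3].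

Ltac oct_ring := intros; oct_coords; oct_unfold; ring.

Lemma onorm2_ge0 x : 0 <= onorm2 x.
Proof. oct_coords; oct_unfold; nra. Qed.

Lemma oinner_sym x y : oinner x y = oinner y x.
Proof. oct_ring. Qed.

Lemma oinnerBl x y z : oinner (osub x y) z = oinner x z - oinner y z.
Proof. oct_ring. Qed.

Lemma oinnerBr x y z : oinner x (osub y z) = oinner x y - oinner x z.
Proof. oct_ring. Qed.

Lemma ore_omulDl x y z : ore (omul (oadd x y) z) = ore (omul x z) + ore (omul y z).
Proof. oct_ring. Qed.

Lemma ore_omulDr x y z : ore (omul x (oadd y z)) = ore (omul x y) + ore (omul x z).
Proof. oct_ring. Qed.

Lemma ore_omul_as_oinner x y z w :
  ore (omul (omul x (oconj y)) (omul z (oconj w)))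
  = oinner (omul w (oconj z)) (omul x (oconj y)).
Proof. oct_ring. Qed.

Lemma oinner_mul_conj_polar x y z w :
  oinner (omul x (oconj y)) (omul z (oconj w)) + oinner (omul x (oconj w)) (omul z (oconj y))
  = 2 * oinner x z * oinner y w.
Proof. oct_ring. Qed.

Definition o2inner (X Y : O2) : R := oinner (fst X) (fst Y) + oinner (snd X) (snd Y).

Lemma o2inner_ge0 X : 0 <= o2inner X X.
Proof.
  unfold o2inner; generalize (onorm2_ge0 (fst X)) (onorm2_ge0 (snd X)); unfold onorm2; lra.
Qed.

Definition o2cross (Y Z : O2) : oct :=
  oadd (omul (snd Y) (oconj (fst Z))) (omul (snd Z) (oconj (fst Y))).

Definition gnum_hess (Y Z X W : O2) : R :=
  2 * oinner (fst Y) (fst Z) * oinner (snd X) (snd W)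
  + 2 * oinner (snd Y) (snd Z) * oinner (fst X) (fst W)
  - ore (omul (oadd (omul (fst X) (oconj (snd W))) (omul (fst W) (oconj (snd X))))
              (o2cross Y Z)).

Lemma gnum_hess_swap Y Z X W : gnum_hess Y Z X W = gnum_hess X W Y Z.
Proof. unfold gnum_hess, o2cross; oct_ring. Qed.

Lemma gmet_formula p Y Z :
  gmet p Y Z = (o2inner Y Z + gnum_hess Y Z p p / 2) / (1 + o2inner p p) ^ 2.
Proof.
  assert (HD : 1 + o2inner p p <> 0) by (pose proof (o2inner_ge0 p); lra).
  replace (1 + o2inner p p) with (1 + onorm2 (fst p) + onorm2 (snd p)) in HD |- *
    by (unfold o2inner, onorm2; ring).
  unfold gmet, ds2.
  match goal with |- (?N1 / ?D - ?N2 / ?D) / 4 = ?M / ?D =>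
    assert (Hpolar : N1 - N2 = 4 * M)
      by (unfold gnum_hess, o2cross, o2inner; oct_coords; oct_unfold; field);
    replace N1 with (N2 + 4 * M) by lra end.
  field; exact HD.
Qed.

Lemma o2inner_plane X W s t :
  o2inner (o2add (o2scal s X) (o2scal t W)) (o2add (o2scal s X) (o2scal t W))
  = o2inner X X * s ^ 2 + 2 * o2inner X W * s * t + o2inner W W * t ^ 2.
Proof. unfold o2inner; oct_ring. Qed.

Lemma gnum_hess_plane Y Z X W s t :
  gnum_hess Y Z (o2add (o2scal s X) (o2scal t W)) (o2add (o2scal s X) (o2scal t W))
  = gnum_hess Y Z X X * s ^ 2 + 2 * gnum_hess Y Z X W * s * t + gnum_hess Y Z W W * t ^ 2.
Proof.
  unfold gnum_hess.
  generalize (o2cross Y Z) (oinner (fst Y) (fst Z)) (oinner (snd Y) (snd Z)).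
  oct_ring.
Qed.

Lemma gmet_plane X W Y Z s t :
  gmet (o2add (o2scal s X) (o2scal t W)) Y Z =
  (o2inner Y Z + gnum_hess Y Z X X / 2 * s ^ 2 + gnum_hess Y Z X W * s * t
     + gnum_hess Y Z W W / 2 * t ^ 2)
  / (1 + o2inner X X * s ^ 2 + 2 * o2inner X W * s * t + o2inner W W * t ^ 2) ^ 2.
Proof.
  rewrite gmet_formula, o2inner_plane, gnum_hess_plane.
  f_equal; field.
Qed.

Lemma Derive_Derive_quad_ratio c0 a b c al be ga : 0 <= al ->
  Derive (fun s => Derive (fun t =>
      (c0 + a * s ^ 2 + b * s * t + c * t ^ 2)
      / (1 + al * s ^ 2 + 2 * be * s * t + ga * t ^ 2) ^ 2) 0) 0
  = b - 4 * c0 * be.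
Proof.
  intros Hal.
  assert (Hslice : forall s, Derive (fun t =>
      (c0 + a * s ^ 2 + b * s * t + c * t ^ 2)
      / (1 + al * s ^ 2 + 2 * be * s * t + ga * t ^ 2) ^ 2) 0
    = b * s / (1 + al * s ^ 2) ^ 2 - 4 * be * s * (c0 + a * s ^ 2) / (1 + al * s ^ 2) ^ 3).
  { intros s; apply is_derive_unique.
    assert (Hpos : 0 < 1 + al * s ^ 2) by nra.
    auto_derive.
    - intros; nra.
    - field; lra. }
  rewrite (Derive_ext _ _ _ Hslice); apply is_derive_unique.
  auto_derive.
  - repeat split; simpl; lra.
  - field.
Qed.

Lemma D2_gmet X W Y Z :
  D2 (fun p => gmet p Y Z) X W = gnum_hess Y Z X W - 4 * o2inner Y Z * o2inner X W.
Proof.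
  unfold D2.
  rewrite <- (Derive_Derive_quad_ratio (o2inner Y Z) (gnum_hess Y Z X X / 2)
    (gnum_hess Y Z X W) (gnum_hess Y Z W W / 2) _ (o2inner X W) (o2inner W W)
    (o2inner_ge0 X)).
  apply Derive_ext; intros s; apply Derive_ext; intros t.
  apply gmet_plane.
Qed.

Lemma is_derive_gmet_0 X Y Z : is_derive (fun t => gmet (o2scal t X) Y Z) 0 0.
Proof.
  apply (is_derive_ext (fun s => gmet (o2add (o2scal s X) (o2scal 0 X)) Y Z)).
  { intros s; f_equal; oct_coords; oct_unfold; rewrite !Rmult_0_l, !Rplus_0_r; reflexivity. }
  eapply is_derive_ext; [intros s; symmetry; apply gmet_plane |].
  pose proof (o2inner_ge0 X).
  auto_derive.
  - nra.
  - field.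
Qed.

Lemma curvR_hess X Y Z W :
  curvR X Y Z W = gnum_hess Y Z X W - gnum_hess X Z Y W
                  + 4 * o2inner X Z * o2inner Y W - 4 * o2inner X W * o2inner Y Z.
Proof.
  unfold curvR; rewrite !D2_gmet, (gnum_hess_swap X W), (gnum_hess_swap Y W).
  lra.
Qed.

Theorem corollary5p4 :
  (* first derivatives of the metric vanish at P0 in the chart (u,v), so the
     paper's curvature convention applies in these coordinates *)
  (forall X Y Z : O2, is_derive (fun t => gmet (o2scal t X) Y Z) 0 0) /\
  (forall a b c d e f g h : oct,
     curvR (a, b) (c, d) (e, f) (g, h) =
       4 * oinner a e * oinner c g - 4 * oinner c e * oinner a g
     + 4 * oinner b f * oinner d h - 4 * oinner d f * oinner b h
     - oinner (omul e (oconj d)) (omul g (oconj b))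
     + oinner (omul e (oconj b)) (omul g (oconj d))
     - oinner (omul c (oconj f)) (omul a (oconj h))
     + oinner (omul a (oconj f)) (omul c (oconj h))
     - oinner (osub (omul a (oconj d)) (omul c (oconj b)))
              (osub (omul g (oconj f)) (omul e (oconj h)))).
Proof.
  split; [exact is_derive_gmet_0 |].
  intros a b c d e f g h.
  rewrite curvR_hess.
  unfold gnum_hess, o2cross, o2inner; cbn [fst snd].
  rewrite !ore_omulDl, !ore_omulDr, !ore_omul_as_oinner, !oinnerBl, !oinnerBr.
  rewrite (oinner_sym (omul e (oconj d)) (omul a (oconj h))),
          (oinner_sym (omul e (oconj b)) (omul c (oconj h))).
  pose proof (oinner_mul_conj_polar a d g f).
  pose proof (oinner_mul_conj_polar a d e h).
  pose proof (oinner_mul_conj_polar c b g f).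
  pose proof (oinner_mul_conj_polar c b e h).
  lra.
Qed.
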